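(* For every real $t$ with $1\leq t\leq n$: $S(t)>0$ if and only if $t>\vartheta^+(G)$.
   Context: Let $G$ be a simple graph with vertex set $V=\{1,\dots,n\}$, edge set $E$ and adjacency matrix $A$. Let $e$ be the all-ones vector, $\langle M,N\rangle=\operatorname{trace}(M^TN)$, and $X\geq 0$ mean entrywise nonnegativity. For real $t$ with $1\leq t\leq n$, $Q(t)$ is the semidefinite program $$\min \tfrac12\langle A,X\rangle\ \text{ s.t. } X\succeq 0,\ X\geq 0,\ \operatorname{trace}(X)=t,\ Xe=t\operatorname{diag}(X)$$ over symmetric $n\times n$ matrices $X$, and $S(t)$ denotes its optimal value. Schrijver's number is $$\vartheta^+(G)=\max\ \operatorname{trace}(X)\ \text{ s.t. } X-xx^T\succeq 0,\ \operatorname{diag}(X)=x,\ X_{i,j}=0\ \forall [i,j]\in E,\ X\geq 0.$$ *)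

From HB Require Import structures.
From mathcomp Require Import all_boot all_order all_algebra.
From mathcomp Require Import classical_sets reals.
Set Implicit Arguments. Unset Strict Implicit. Unset Printing Implicit Defensive.
Import Order.TTheory GRing.Theory Num.Theory.
Local Open Scope ring_scope.
Local Open Scope classical_set_scope.

Definition simple_graph (n : nat) (E : rel 'I_n) : Prop :=
  symmetric E /\ irreflexive E.

Definition adjmx (R : realType) (n : nat) (E : rel 'I_n) : 'M[R]_n :=
  \matrix_(i, j) (E i j)%:R.

Definition psd (R : realType) (n : nat) (X : 'M[R]_n) : Prop :=
  X^T = X /\ forall v : 'cV[R]_n, 0 <= (v^T *m X *m v) 0 0.

Definition entrywise_nonneg (R : realType) (n : nat) (X : 'M[R]_n) : Prop :=
  forall i j, 0 <= X i j.

Definition frob (R : realType) (n : nat) (M N : 'M[R]_n) : R := \tr (M^T *m N).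

Definition diagv (R : realType) (n : nat) (X : 'M[R]_n) : 'cV[R]_n :=
  \col_i X i i.

Definition onesv (R : realType) (n : nat) : 'cV[R]_n := const_mx 1.

Definition Q_feasible (R : realType) (n : nat) (t : R) (X : 'M[R]_n) : Prop :=
  X^T = X /\ psd X /\ entrywise_nonneg X /\ \tr X = t /\
  X *m onesv R n = t *: diagv X.

Definition S_val (R : realType) (n : nat) (E : rel 'I_n) (t : R) : R :=
  inf [set v : R | exists X : 'M[R]_n,
        Q_feasible t X /\ v = 2^-1 * frob (adjmx R E) X].

Definition theta_plus_feasible (R : realType) (n : nat) (E : rel 'I_n)
    (X : 'M[R]_n) (x : 'cV[R]_n) : Prop :=
  X^T = X /\ psd (X - x *m x^T) /\ diagv X = x /\
  (forall i j, E i j -> X i j = 0) /\ entrywise_nonneg X.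

Definition theta_plus (R : realType) (n : nat) (E : rel 'I_n) : R :=
  sup [set v : R | exists (X : 'M[R]_n) (x : 'cV[R]_n),
        theta_plus_feasible E X x /\ v = \tr X].

Arguments S_val R {n} E t.
Arguments theta_plus R {n} E.

(* Deleting the edge entries of a Q(t)-feasible X of edge mass k, adding [2k]
   to its diagonal and scaling by [1/(1 + 4nk)] gives a Schrijver-feasible
   matrix of trace at least [t/(1 + 4nk)]; so [S t = 0] forces
   [theta_plus >= t]. Conversely, if [t <= theta_plus], take Y Schrijver-feasible with trace
   close to t and a nonnegative near-maximiser s of the Rayleigh quotient
   [s^T Y s / sum_i Y_ii s_i^2], whose supremum is at least [tr Y]. Then
   [D_s Y D_s] has row sums almost t times its diagonal; adding a small
   multiple of the all-ones matrix and a nonnegative diagonal repairs this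
   exactly, and normalising the trace gives Q(t)-feasible matrices of
   arbitrarily small edge mass. *)

From HB Require Import structures.
From mathcomp Require Import all_boot all_order all_algebra.
From mathcomp Require Import classical_sets reals.
From mathcomp Require Import ring lra.
Import Order.TTheory GRing.Theory Num.Theory.
Local Open Scope ring_scope.
Local Open Scope classical_set_scope.

Lemma quad_discriminant_le (R : realFieldType) (A B C : R) : 0 <= C ->
  (forall x, 0 <= A + 2 * x * B + x ^+ 2 * C) -> B ^+ 2 <= A * C.
Proof.
move=> C_ge0 H; have A_ge0 : 0 <= A by have := H 0; lra.
case: (ltrgt0P C) C_ge0 => // [C_gt0|C0] _.
- have := H (- B / C); have -> : - B / C = - (B / C) by rewrite mulNr.
  have e : B / C * C = B by rewrite divfK ?gt_eqF.
  nra.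
- rewrite C0 mulr0; case: (eqVneq B 0) => [->|B_neq0]; first by rewrite expr0n.
  have := H (- (A + 1) / (2 * B)); rewrite C0 mulr0 addr0.
  have -> : 2 * (- (A + 1) / (2 * B)) * B = - (A + 1) by field.
  lra.
Qed.

Lemma sum_delta_l {R : pzSemiRingType} {n : nat} (F : 'I_n -> R) (i : 'I_n) :
  \sum_k (k == i)%:R * F k = F i.
Proof.
rewrite (bigD1 i) //= eqxx mul1r big1 ?addr0 // => k /negbTE ->; exact: mul0r.
Qed.

Section BilinearForms.
Context {R : realFieldType} {n : nat}.
Implicit Types (F G : 'I_n -> 'I_n -> R) (d s u v w : 'I_n -> R).

Definition bform F u v : R := \sum_i \sum_j u i * F i j * v j.

Definition unitv (i : 'I_n) : 'I_n -> R := fun k => (k == i)%:R.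

Lemma bform_ext F G u v : F =2 G -> bform F u v = bform G u v.
Proof. by move=> eFG; apply: eq_bigr => i _; apply: eq_bigr => j _; rewrite eFG. Qed.

Lemma bform_mx F u v : bform (\matrix_(i, j) F i j) u v = bform F u v.
Proof. by apply: bform_ext => i j; rewrite mxE. Qed.

Lemma bform_sym F u v : (forall i j, F i j = F j i) -> bform F u v = bform F v u.
Proof.
move=> F_sym; rewrite /bform exchange_big /=; apply: eq_bigr => i _.
by apply: eq_bigr => j _; rewrite F_sym; ring.
Qed.

Lemma bform_combl F a b u w v :
  bform F (fun i => a * u i + b * w i) v = a * bform F u v + b * bform F w v.
Proof.
rewrite /bform !mulr_sumr -big_split /=; apply: eq_bigr => i _.
by rewrite !mulr_sumr -big_split /=; apply: eq_bigr => j _; ring.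
Qed.

Lemma bform_combr F a b u w v :
  bform F v (fun i => a * u i + b * w i) = a * bform F v u + b * bform F v w.
Proof.
rewrite /bform !mulr_sumr -big_split /=; apply: eq_bigr => i _.
by rewrite !mulr_sumr -big_split /=; apply: eq_bigr => j _; ring.
Qed.

Lemma bformD F G u v :
  bform (fun i j => F i j + G i j) u v = bform F u v + bform G u v.
Proof.
rewrite /bform -big_split; apply: eq_bigr => i _; rewrite -big_split.
by apply: eq_bigr => j _ /=; ring.
Qed.

Lemma bformZ k F u v : bform (fun i j => k * F i j) u v = k * bform F u v.
Proof.
rewrite /bform mulr_sumr; apply: eq_bigr => i _; rewrite mulr_sumr.
by apply: eq_bigr => j _; ring.
Qed.

Lemma bform_diag d u v :
  bform (fun i j => d i * (i == j)%:R) u v = \sum_i u i * d i * v i.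
Proof.
apply: eq_bigr => i _; rewrite -[RHS](sum_delta_l (fun j => u i * d i * v j) i).
by apply: eq_bigr => j _; rewrite eq_sym; ring.
Qed.

Lemma bform_outer d s u v :
  bform (fun i j => d i * s j) u v = (\sum_i u i * d i) * (\sum_j s j * v j).
Proof.
rewrite /bform mulr_suml; apply: eq_bigr => i _; rewrite mulr_sumr.
by apply: eq_bigr => j _; ring.
Qed.

Lemma bform_const c u v :
  bform (fun _ _ => c) u v = c * (\sum_i u i) * (\sum_j v j).
Proof.
rewrite /bform -mulrA mulr_suml mulr_sumr; apply: eq_bigr => i _.
by rewrite !mulr_sumr; apply: eq_bigr => j _; ring.
Qed.

Lemma bform_scale s F u v :
  bform (fun i j => s i * F i j * s j) u v =
  bform F (fun i => s i * u i) (fun j => s j * v j).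
Proof. by apply: eq_bigr => i _; apply: eq_bigr => j _; ring. Qed.

Lemma bform_unitvl F i v : bform F (unitv i) v = \sum_j F i j * v j.
Proof.
rewrite /bform exchange_big /=; apply: eq_bigr => j _.
by rewrite -[RHS](sum_delta_l (fun k => F k j * v j) i); apply: eq_bigr => k _; ring.
Qed.

Lemma bform_unitv F i j : bform F (unitv i) (unitv j) = F i j.
Proof.
rewrite bform_unitvl -[RHS](sum_delta_l (F i) j).
by apply: eq_bigr => k _; rewrite mulrC.
Qed.

Section CauchySchwarz.
Context {F : 'I_n -> 'I_n -> R}.
Hypotheses (F_sym : forall i j, F i j = F j i) (F_psd : forall v, 0 <= bform F v v).

Lemma bform_CauchySchwarz u v : bform F u v ^+ 2 <= bform F u u * bform F v v.
Proof.
apply: quad_discriminant_le => // x.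
have := F_psd (fun i => 1 * u i + x * v i).
rewrite bform_combl !bform_combr (bform_sym F v u F_sym).
by congr (0 <= _); ring.
Qed.

Lemma psd_entry_sq i j : F i j ^+ 2 <= F i i * F j j.
Proof. by have := bform_CauchySchwarz (unitv i) (unitv j); rewrite !bform_unitv. Qed.

End CauchySchwarz.

Lemma sum_le_term (F : 'I_n -> R) (i : 'I_n) :
  (forall k, 0 <= F k) -> F i <= \sum_k F k.
Proof. by move=> F_ge0; rewrite (bigD1 i) //= lerDl; exact: sumr_ge0. Qed.

Lemma bform_le_mass F v : (forall i j, 0 <= F i j) ->
  bform F v v <= (\sum_i \sum_j F i j) * \sum_k v k ^+ 2.
Proof.
move=> F_ge0; rewrite /bform mulr_suml; apply: ler_sum => i _.
rewrite mulr_suml; apply: ler_sum => j _.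
have sq_le k : v k ^+ 2 <= \sum_l v l ^+ 2.
  by apply: (sum_le_term (fun l => v l ^+ 2)) => l; exact: sqr_ge0.
have vij_le : v i * v j <= \sum_l v l ^+ 2 by have := sq_le i; have := sq_le j; nra.
by rewrite mulrAC mulrC; exact: ler_wpM2l.
Qed.

Lemma sqr_sum_le v : (\sum_i v i) ^+ 2 <= n%:R * \sum_i v i ^+ 2.
Proof.
pose I := fun i j : 'I_n => 1 * (i == j)%:R : R.
have I_sym i j : I i j = I j i by rewrite /I eq_sym.
have I_psd w : 0 <= bform I w w.
  by rewrite bform_diag; apply: sumr_ge0 => i _; rewrite mulr1 -expr2 sqr_ge0.
have := bform_CauchySchwarz I_sym I_psd (fun _ => 1) v; rewrite !bform_diag.
under eq_bigr do rewrite !mul1r.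
under [X in _ <= X * _]eq_bigr do rewrite !mul1r.
under [X in _ <= _ * X]eq_bigr do rewrite mulr1 -expr2.
by rewrite sumr_const card_ord.
Qed.

End BilinearForms.

Section Feasibility.
Context {R : realType} {n : nat} (E : rel 'I_n).
Implicit Types (X : 'M[R]_n) (x : 'cV[R]_n) (t : R).

Lemma qform_mx X (v : 'cV[R]_n) :
  (v^T *m X *m v) 0 0 = bform X (fun i => v i 0) (fun i => v i 0).
Proof.
rewrite mxE; under eq_bigr => j _ do rewrite mxE mulr_suml.
rewrite exchange_big /=; apply: eq_bigr => i _; apply: eq_bigr => j _.
by rewrite !mxE.
Qed.

Lemma psdP X : psd X <-> (forall i j, X i j = X j i) /\ forall v, 0 <= bform X v v.
Proof.
split=> [[XT X_psd]|[X_sym X_psd]]; split.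
- by move=> i j; rewrite -{1}XT mxE.
- move=> v; have := X_psd (\col_i v i); rewrite qform_mx.
  by congr (_ <= _); apply: eq_bigr => i _; apply: eq_bigr => j _; rewrite !mxE.
- by apply/matrixP => i j; rewrite mxE X_sym.
- by move=> v; rewrite qform_mx.
Qed.

Lemma Q_feasibleP t X :
  Q_feasible t X <->
  [/\ (forall i j, X i j = X j i), (forall v, 0 <= bform X v v),
      (forall i j, 0 <= X i j), \sum_i X i i = t &
      forall i, \sum_j X i j = t * X i i].
Proof.
have rowE i : (X *m onesv R n) i 0 = \sum_j X i j.
  by rewrite mxE; apply: eq_bigr => j _; rewrite mxE mulr1.
split.
- case=> _ [/psdP [X_sym X_psd] [X_ge0 [X_tr X_row]]]; split => // i.
  by move/matrixP: X_row => /(_ i 0); rewrite rowE !mxE.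
- case=> X_sym X_psd X_ge0 X_tr X_row.
  split; first by apply/matrixP => i j; rewrite mxE X_sym.
  split; first exact/psdP.
  do 2![split => //]; apply/matrixP => i k.
  by rewrite (ord1 k) rowE !mxE X_row.
Qed.

Lemma bform_sub_outer X x v :
  bform (X - x *m x^T) v v = bform X v v - (\sum_i v i * x i 0) ^+ 2.
Proof.
have -> : bform (X - x *m x^T) v v =
          bform (fun i j => X i j + (-1) * (x i 0 * x j 0)) v v.
  by apply: bform_ext => i j; rewrite !mxE big_ord1 !mxE; ring.
rewrite bformD bformZ bform_outer expr2 mulN1r.
by congr (_ - _ * _); apply: eq_bigr => j _; rewrite mulrC.
Qed.

Lemma theta_plus_feasibleP X x :
  theta_plus_feasible E X x <->
  [/\ (forall i j, X i j = X j i),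
      (forall v, (\sum_i v i * X i i) ^+ 2 <= bform X v v),
      (forall i, X i i = x i 0), (forall i j, E i j -> X i j = 0) &
      (forall i j, 0 <= X i j)].
Proof.
split.
- case=> XT [/psdP [_ X_psd] [/matrixP X_diag [X_edge X_ge0]]].
  have x_diag i : X i i = x i 0 by have := X_diag i 0; rewrite !mxE.
  split => //; first by move=> i j; rewrite -{1}XT mxE.
  move=> v; have := X_psd v; rewrite bform_sub_outer subr_ge0.
  by under eq_bigr do rewrite -x_diag.
- case=> X_sym X_psd x_diag X_edge X_ge0.
  split; first by apply/matrixP => i j; rewrite mxE X_sym.
  split.
    apply/psdP; split; first by move=> i j; rewrite !mxE !big_ord1 !mxE X_sym mulrC.
    move=> v; rewrite bform_sub_outer subr_ge0.
    by under eq_bigr do rewrite -x_diag.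
  split; first by apply/matrixP => i k; rewrite (ord1 k) !mxE x_diag.
  by split.
Qed.

Definition edge_mass X : R := \sum_i \sum_j (E i j)%:R * X i j.

Lemma frob_adjmx X : frob (adjmx R E) X = edge_mass X.
Proof.
rewrite /frob /mxtrace /edge_mass exchange_big /=; apply: eq_bigr => i _.
by rewrite mxE; apply: eq_bigr => j _; rewrite !mxE.
Qed.

Lemma edge_mass_ge0 {X} : (forall i j, 0 <= X i j) -> 0 <= edge_mass X.
Proof.
by move=> X_ge0; do 2![apply: sumr_ge0 => ? _]; rewrite mulr_ge0 ?ler0n.
Qed.

Definition theta_plus_traces : set R :=
  [set v | exists X x, theta_plus_feasible E X x /\ v = \tr X].

End Feasibility.

Arguments edge_mass {R n} E X.
Arguments theta_plus_traces R {n} E.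

Section ThetaPlus.
Context {R : realType} {n : nat} (E : rel 'I_n).
Implicit Types (X : 'M[R]_n) (x : 'cV[R]_n).

Lemma theta_plus_feasible_diag {X x} i :
  theta_plus_feasible E X x -> 0 <= X i i <= 1.
Proof.
case/theta_plus_feasibleP => _ X_psd _ _ X_ge0.
have := X_psd (unitv i); rewrite bform_unitv sum_delta_l => Xii_sq.
have Xii_ge0 := X_ge0 i i.
by rewrite Xii_ge0 /=; nra.
Qed.

Lemma theta_plus_feasible_trace_le X x :
  theta_plus_feasible E X x -> \tr X <= n%:R.
Proof.
move=> X_feas; apply: (@le_trans _ _ (\sum_(i < n) (1 : R))).
  by apply: ler_sum => i _; case/andP: (theta_plus_feasible_diag i X_feas).
by rewrite sumr_const card_ord.
Qed.

Lemma theta_plus_feasible_trace_le_edge X x i j :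
  simple_graph E -> E i j -> theta_plus_feasible E X x -> \tr X <= n%:R - 1.
Proof.
move=> [E_sym E_irr] Eij X_feas.
have j_neq_i : j != i by apply: contraTneq Eij => ->; rewrite E_irr.
have /theta_plus_feasibleP [_ X_psd _ X_edge _] := X_feas.
have Xij_le1 : X i i + X j j <= 1.
  have := X_psd (fun k => 1 * unitv i k + 1 * unitv j k).
  have Eji : E j i by rewrite E_sym.
  rewrite bform_combl !bform_combr !bform_unitv (X_edge i j Eij) (X_edge j i Eji).
  under eq_bigr do rewrite !mul1r mulrDl.
  rewrite big_split /= !sum_delta_l !mul1r addr0 add0r.
  have /andP[Xii_ge0 _] := theta_plus_feasible_diag i X_feas.
  have /andP[Xjj_ge0 _] := theta_plus_feasible_diag j X_feas.
  nra.
have : n%:R - \tr X = \sum_k (1 - X k k).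
  by rewrite sumrB sumr_const card_ord.
rewrite (bigD1 i) //= (bigD1 j) //=.
have : 0 <= \sum_(k | (k != i) && (k != j)) (1 - X k k).
  by apply: sumr_ge0 => k _; case/andP: (theta_plus_feasible_diag k X_feas); lra.
lra.
Qed.

Lemma zero_theta_plus_feasible : theta_plus_feasible E (0 : 'M[R]_n) 0.
Proof.
apply/theta_plus_feasibleP; split=> [i j|v|i|i j _|i j]; rewrite ?mxE //.
rewrite /bform !big1 ?expr0n // => i _; rewrite ?big1 // => *; rewrite mxE; ring.
Qed.

Lemma theta_plus_traces_ubound : ubound (theta_plus_traces R E) n%:R.
Proof. by move=> _ [X [x [X_feas ->]]]; exact: theta_plus_feasible_trace_le X_feas. Qed.

Lemma theta_plus_traces_neq0 : theta_plus_traces R E !=set0.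
Proof.
by exists 0, 0, 0; rewrite mxtrace0; split => //; exact: zero_theta_plus_feasible.
Qed.

Lemma le_theta_plus {X x} : theta_plus_feasible E X x -> \tr X <= theta_plus R E.
Proof.
move=> X_feas; apply: ub_le_sup; first by exists n%:R; exact: theta_plus_traces_ubound.
by exists X, x.
Qed.

Lemma theta_plus_ge0 : 0 <= theta_plus R E.
Proof. by rewrite -(mxtrace0 R n); exact: le_theta_plus zero_theta_plus_feasible. Qed.

Lemma theta_plus_le_edge {i j} :
  simple_graph E -> E i j -> theta_plus R E <= n%:R - 1.
Proof.
move=> G Eij; apply: ge_sup; first exact: theta_plus_traces_neq0.
by move=> _ [X [x [X_feas ->]]]; exact: theta_plus_feasible_trace_le_edge G Eij X_feas.
Qed.

End ThetaPlus.

Section QFeasiblePoints.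
Context {R : realType} {n : nat} (E : rel 'I_n).
Implicit Types (X : 'M[R]_n) (t : R).

Lemma Q_feasible_one (k : 'I_n) :
  Q_feasible (1 : R) (\matrix_(i, j) ((i == k)%:R * (j == k)%:R)).
Proof.
apply/Q_feasibleP; split.
- by move=> i j; rewrite !mxE mulrC.
- move=> v; rewrite bform_mx bform_outer.
  by under [X in _ * X]eq_bigr do rewrite mulrC; rewrite -expr2 sqr_ge0.
- by move=> i j; rewrite mxE mulr_ge0 ?ler0n.
- by under eq_bigr do rewrite mxE; rewrite sum_delta_l eqxx.
- move=> i; under eq_bigr do rewrite mxE.
  rewrite -mulr_sumr mxE (eq_bigr _ (fun j _ => esym (mulr1 _))) sum_delta_l.
  by case: (i == k); rewrite ?mul0r ?mulr0 ?mul1r ?mulr1.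
Qed.

Lemma edge_mass_one (k : 'I_n) : irreflexive E ->
  edge_mass E (\matrix_(i, j) ((i == k)%:R * (j == k)%:R) : 'M[R]_n) = 0.
Proof.
move=> E_irr; rewrite /edge_mass big1 // => i _; rewrite big1 // => j _.
rewrite mxE; case: (eqVneq i k) => [->|]; last by rewrite mul0r mulr0.
by case: (eqVneq j k) => [->|]; rewrite ?E_irr ?mul0r ?mulr0.
Qed.

Lemma Q_feasible_uniform t : 1 < t -> t <= n%:R ->
  Q_feasible t (\matrix_(i, j)
    (t / (n%:R * (n%:R - 1)) * ((n%:R - t) * (i == j)%:R + (t - 1))) : 'M_n).
Proof.
move=> t_gt1 t_le_n; set c := t / _.
have n_gt1 : 1 < n%:R :> R by lra.
have c_ge0 : 0 <= c by rewrite divr_ge0 ?mulr_ge0 //; lra.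
apply/Q_feasibleP; split.
- by move=> i j; rewrite !mxE eq_sym.
- move=> v; rewrite bform_mx bformZ; apply: mulr_ge0 => //.
  rewrite (bformD (fun i j => (n%:R - t) * (i == j)%:R) (fun _ _ => t - 1)).
  rewrite bform_diag bform_const -mulrA -expr2; apply: addr_ge0.
    by apply: sumr_ge0 => i _; rewrite mulrAC -expr2 mulr_ge0 ?sqr_ge0 //; lra.
  by rewrite mulr_ge0 ?sqr_ge0 //; lra.
- by move=> i j; rewrite mxE mulr_ge0 // addr_ge0 ?mulr_ge0 ?ler0n //; lra.
- under eq_bigr do rewrite mxE eqxx mulr1.
  by rewrite sumr_const card_ord -mulr_natl /c; field; lra.
- move=> i; under eq_bigr do rewrite mxE.
  rewrite -mulr_sumr big_split /= -mulr_sumr sumr_const card_ord mxE eqxx.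
  under eq_bigr do rewrite eq_sym -[(_ == _)%:R]mulr1.
  by rewrite sum_delta_l -[(t - 1) *+ n]mulr_natl /c /=; field; lra.
Qed.

Lemma Q_feasible_exists {t} : 1 <= t -> t <= n%:R -> exists X, Q_feasible t X.
Proof.
move=> t_ge1 t_le_n; case: (ltrP 1 t) => [t_gt1|t_le1].
  by eexists; exact: Q_feasible_uniform.
have n_gt0 : (0 < n)%N by rewrite -(ltr_nat R); lra.
have -> : t = 1 by lra.
by eexists; exact: (Q_feasible_one (Ordinal n_gt0)).
Qed.

Lemma S_val_le {t X} : Q_feasible t X -> S_val R E t <= 2^-1 * edge_mass E X.
Proof.
move=> X_feas; apply: ge_inf; last by exists X; rewrite frob_adjmx.
exists 0 => _ [Y [/Q_feasibleP [_ _ Y_ge0 _ _] ->]].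
by rewrite frob_adjmx mulr_ge0 ?invr_ge0 ?ler0n ?edge_mass_ge0.
Qed.

Lemma S_val_lt {t e} : 1 <= t -> t <= n%:R -> S_val R E t < e ->
  exists X, Q_feasible t X /\ 2^-1 * edge_mass E X < e.
Proof.
move=> t_ge1 t_le_n /(inf_lt _) [].
  have [X X_feas] := Q_feasible_exists t_ge1 t_le_n.
  by exists (2^-1 * frob (adjmx R E) X), X.
by move=> _ [X [X_feas ->]]; rewrite frob_adjmx; exists X.
Qed.

End QFeasiblePoints.

Lemma regularization_ineq {R : realFieldType} (N k a b W : R) :
  0 < N -> 0 <= k -> b ^+ 2 <= N * W ->
  (a + 2 * k * b) ^+ 2 <= (1 + 4 * N * k) * (a ^+ 2 + k * W).
Proof.
move=> N_gt0 k_ge0 bW; rewrite -subr_ge0 -(pmulr_rge0 _ N_gt0).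
have -> : N * ((1 + 4 * N * k) * (a ^+ 2 + k * W) - (a + 2 * k * b) ^+ 2) =
          k * ((2 * N * a - b) ^+ 2 + (N * W - b ^+ 2)) +
          4 * N * k ^+ 2 * (N * W - b ^+ 2) by ring.
have bW' : 0 <= N * W - b ^+ 2 by lra.
apply: addr_ge0; first by rewrite mulr_ge0 // addr_ge0 ?sqr_ge0.
by rewrite !mulr_ge0 ?sqr_ge0 //; lra.
Qed.

Section Regularization.
Context {R : realType} {n : nat} (E : rel 'I_n).
Hypothesis G : simple_graph E.
Implicit Types (X : 'M[R]_n) (t k : R).

Lemma Q_feasible_diag_sq {t X} v : 0 < t -> Q_feasible t X ->
  (\sum_i v i * X i i) ^+ 2 <= bform X v v.
Proof.
move=> t_gt0 /Q_feasibleP [X_sym X_psd _ X_tr X_row].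
have := bform_CauchySchwarz X_sym X_psd (fun _ => 1) v.
have -> : bform X (fun _ => 1) v = t * \sum_i v i * X i i.
  rewrite /bform exchange_big /= mulr_sumr; apply: eq_bigr => j _.
  rewrite -mulr_suml (eq_bigr (fun i => X j i)) ?X_row; first ring.
  by move=> i _; rewrite mul1r X_sym.
have -> : bform X (fun _ => 1) (fun _ => 1) = t * t.
  rewrite /bform -{2}X_tr mulr_sumr; apply: eq_bigr => i _.
  by rewrite -X_row; apply: eq_bigr => j _; ring.
by rewrite exprMn -expr2 ler_pM2l ?exprn_gt0.
Qed.

Definition regularization k X : 'M[R]_n :=
  \matrix_(i, j) ((1 + 4 * n%:R * k)^-1 *
                  ((~~ E i j)%:R * X i j + 2 * k * (i == j)%:R)).

Lemma regularization_diag k X i :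
  regularization k X i i = (1 + 4 * n%:R * k)^-1 * (X i i + 2 * k).
Proof. by case: G => _ E_irr; rewrite mxE E_irr eqxx mul1r mulr1. Qed.

Lemma trace_regularization {t} k {X} : Q_feasible t X ->
  \tr (regularization k X) = (1 + 4 * n%:R * k)^-1 * (t + 2 * k * n%:R).
Proof.
case/Q_feasibleP => _ _ _ X_tr _.
rewrite /mxtrace (eq_bigr _ (fun i _ => regularization_diag k X i)).
by rewrite -mulr_sumr big_split /= X_tr sumr_const card_ord -[2 * k *+ n]mulr_natr.
Qed.

Lemma diag_sq_le_offedge {t k X} v :
  0 < t -> Q_feasible t X -> edge_mass E X <= k ->
  (\sum_i v i * X i i) ^+ 2 + k * \sum_i v i ^+ 2 <=
  bform (fun i j => (~~ E i j)%:R * X i j) v v + 2 * k * \sum_i v i ^+ 2.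
Proof.
move=> t_gt0 X_feas mass_le; have /Q_feasibleP [_ _ X_ge0 _ _] := X_feas.
set W := \sum_i v i ^+ 2; have W_ge0 : 0 <= W by apply: sumr_ge0 => i _; exact: sqr_ge0.
have X_split : bform X v v = bform (fun i j => (~~ E i j)%:R * X i j) v v +
                             bform (fun i j => (E i j)%:R * X i j) v v.
  rewrite -bformD; apply: bform_ext => i j.
  by case: (E i j); rewrite /= ?mul1r ?mul0r ?add0r ?addr0.
have edge_le : bform (fun i j => (E i j)%:R * X i j) v v <= k * W.
  apply: le_trans (bform_le_mass _ _ _) (ler_wpM2r W_ge0 mass_le) => i j.
  by rewrite mulr_ge0 ?ler0n.
by have := Q_feasible_diag_sq v t_gt0 X_feas; lra.
Qed.

Lemma theta_plus_feasible_regularization {t k X} :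
  0 < t -> t <= n%:R -> Q_feasible t X -> 0 <= k -> edge_mass E X <= k ->
  theta_plus_feasible E (regularization k X) (diagv (regularization k X)).
Proof.
move=> t_gt0 t_le_n X_feas k_ge0 mass_le; case: G => E_sym E_irr.
have /Q_feasibleP [X_sym _ X_ge0 _ _] := X_feas.
set lam := (1 + 4 * n%:R * k)^-1.
have lam_gt0 : 0 < lam by rewrite invr_gt0; nra.
have lamE : lam * (1 + 4 * n%:R * k) = 1 by rewrite mulVf //; nra.
set Y := regularization k X.
apply/theta_plus_feasibleP; split.
- by move=> i j; rewrite !mxE E_sym X_sym eq_sym.
- move=> v; set a := \sum_i v i * X i i; set b := \sum_i v i.
  set W := \sum_i v i ^+ 2; set bN := bform (fun i j => (~~ E i j)%:R * X i j) v v.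
  have := diag_sq_le_offedge v t_gt0 X_feas mass_le; rewrite -/a -/W -/bN => a_sq.
  have -> : \sum_i v i * Y i i = lam * (a + 2 * k * b).
    under eq_bigr do rewrite regularization_diag.
    rewrite mulrDr mulrA !mulr_sumr -big_split /=.
    by apply: eq_bigr => i _; rewrite /lam; ring.
  have -> : bform Y v v = lam * (bN + 2 * k * W).
    rewrite bform_mx bformZ bformD.
    by rewrite (bform_diag (fun _ => 2 * k)) mulr_sumr; congr (_ * (_ + _));
      apply: eq_bigr => i _; ring.
  have n_gt0 : 0 < n%:R :> R by lra.
  have ineq := @regularization_ineq _ n%:R k a b W n_gt0 k_ge0 (sqr_sum_le v).
  rewrite exprMn expr2 -mulrA ler_pM2l //.
  apply: le_trans (ler_wpM2l (ltW lam_gt0) ineq) _.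
  by rewrite mulrA lamE mul1r; lra.
- by move=> i; rewrite [RHS]mxE.
- move=> i j Eij; have /negbTE ij_neq : i != j.
    by apply: contraTneq Eij => ->; rewrite E_irr.
  by rewrite mxE Eij ij_neq mulr0 addr0 mul0r mulr0.
- by move=> i j; rewrite mxE mulr_ge0 ?(ltW lam_gt0) // addr_ge0 ?mulr_ge0 ?ler0n.
Qed.

Lemma theta_plus_ge_Q_feasible {t k X} :
  0 < t -> t <= n%:R -> Q_feasible t X -> 0 <= k -> edge_mass E X <= k ->
  t / (1 + 4 * n%:R * k) <= theta_plus R E.
Proof.
move=> t_gt0 t_le_n X_feas k_ge0 mass_le.
apply: le_trans (le_theta_plus E
  (theta_plus_feasible_regularization t_gt0 t_le_n X_feas k_ge0 mass_le)).
rewrite (trace_regularization k X_feas) mulrC.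
apply: ler_wpM2l; first by rewrite invr_ge0; nra.
by rewrite lerDl !mulr_ge0 //; lra.
Qed.

Lemma S_val_gt0 {t} : 1 <= t -> t <= n%:R -> theta_plus R E < t -> 0 < S_val R E t.
Proof.
move=> t_ge1 t_le_n tp_lt_t; rewrite ltNge; apply/negP => S_le0.
have tp_ge0 : 0 <= theta_plus R E := theta_plus_ge0 E.
set tp := theta_plus R E in tp_lt_t tp_ge0.
have n_gt0 : 0 < n%:R :> R by lra.
pose k := (t - tp) / (4 * n%:R * t).
have k_gt0 : 0 < k by rewrite divr_gt0 ?mulr_gt0 //; lra.
have [X [X_feas mass_lt]] : exists X, Q_feasible t X /\ 2^-1 * edge_mass E X < k / 2.
  by apply: (S_val_lt E t_ge1 t_le_n); lra.
have mass_le : edge_mass E X <= k by lra.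
have := theta_plus_ge_Q_feasible (lt_le_trans ltr01 t_ge1) t_le_n X_feas
                                 (ltW k_gt0) mass_le.
have -> : t / (1 + 4 * n%:R * k) = t ^+ 2 / (2 * t - tp).
  by rewrite /k; field; lra.
rewrite -/tp ler_pdivrMr; last lra.
nra.
Qed.

End Regularization.

Lemma amgm2 {R : realFieldType} (p q r : R) :
  0 <= q -> 0 <= r -> p ^+ 2 <= q * r -> 2 * p <= q + r.
Proof.
move=> q_ge0 r_ge0 pqr; have [p_le0|p_gt0] := lerP p 0; first lra.
rewrite -ler_sqr ?nnegrE; [|lra|lra].
by have := sqr_ge0 (q - r); nra.
Qed.

Definition diag_form {R : realType} {n : nat} (Y : 'M[R]_n) (s : 'I_n -> R) : R :=
  \sum_i Y i i * s i ^+ 2.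

Definition rayleigh_quotients {R : realType} {n : nat} (Y : 'M[R]_n) : set R :=
  [set r | exists s, 0 < diag_form Y s /\ r = bform Y s s / diag_form Y s].

Definition rayleigh_sup {R : realType} {n : nat} (Y : 'M[R]_n) : R :=
  sup (rayleigh_quotients Y).

Section Rayleigh.
Context {R : realType} {n : nat} {Y : 'M[R]_n}.
Hypotheses (Y_sym : forall i j, Y i j = Y j i)
  (Y_psd : forall v, 0 <= bform Y v v) (Y_ge0 : forall i j, 0 <= Y i j).
Implicit Types (s : 'I_n -> R).

Lemma diag_form_term_le s i : Y i i * s i ^+ 2 <= diag_form Y s.
Proof.
by apply: (sum_le_term (fun k => Y k k * s k ^+ 2)) => k; rewrite mulr_ge0 ?sqr_ge0.
Qed.

Lemma diag_form_ge0 s : 0 <= diag_form Y s.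
Proof. by apply: sumr_ge0 => i _; rewrite mulr_ge0 ?sqr_ge0. Qed.

(* Any finite bound will do: it only has to make [rayleigh_sup Y] a genuine
   supremum. *)
Lemma bform_le_diag_form s : bform Y s s <= (n * n)%:R * diag_form Y s.
Proof.
have sum_const (c : R) : \sum_(i < n) c = c *+ n by rewrite sumr_const card_ord.
rewrite natrM -mulrA !mulr_natl -!sum_const; apply: ler_sum => i _.
apply: ler_sum => j _.
rewrite -(ler_pM2l (ltr0Sn R 1)) [leRHS]mulr_natl [leRHS]mulr2n.
apply: le_trans (lerD (diag_form_term_le s i) (diag_form_term_le s j)).
apply: amgm2; rewrite ?(mulr_ge0 (Y_ge0 _ _) (sqr_ge0 _)) //.
rewrite (_ : (s i * Y i j * s j) ^+ 2 = (s i * s j) ^+ 2 * Y i j ^+ 2); last by ring.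
rewrite (_ : Y i i * s i ^+ 2 * _ = (s i * s j) ^+ 2 * (Y i i * Y j j)); last by ring.
by rewrite ler_wpM2l ?sqr_ge0 ?psd_entry_sq.
Qed.

Lemma rayleigh_quotients_ubound : ubound (rayleigh_quotients Y) (n * n)%:R.
Proof. by move=> _ [s [c_gt0 ->]]; rewrite ler_pdivrMr //; exact: bform_le_diag_form. Qed.

Lemma bform_le_rayleigh s : bform Y s s <= rayleigh_sup Y * diag_form Y s.
Proof.
have [c_gt0|c_le0] := ltrP 0 (diag_form Y s).
  rewrite -ler_pdivrMr //; apply: ub_le_sup; last by exists s.
  by exists (n * n)%:R; exact: rayleigh_quotients_ubound.
have c0 : diag_form Y s = 0 by apply/eqP; rewrite eq_le c_le0 diag_form_ge0.
by have := bform_le_diag_form s; rewrite c0 !mulr0.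
Qed.

Lemma diag_form_one : diag_form Y (fun _ => 1) = \tr Y.
Proof. by apply: eq_bigr => i _; rewrite expr1n mulr1. Qed.

Hypothesis trY_gt0 : 0 < \tr Y.

Lemma trace_le_rayleigh_sup :
  \tr Y ^+ 2 <= bform Y (fun _ => 1) (fun _ => 1) -> \tr Y <= rayleigh_sup Y.
Proof.
move=> tr_sq; have := bform_le_rayleigh (fun _ => 1); rewrite diag_form_one => le_tr.
by rewrite -(ler_pM2r trY_gt0) -expr2; exact: le_trans tr_sq le_tr.
Qed.

Lemma rayleigh_sup_ge0 : 0 <= rayleigh_sup Y.
Proof.
have := bform_le_rayleigh (fun _ => 1); rewrite diag_form_one => le_tr.
by rewrite -(pmulr_lge0 _ trY_gt0); exact: le_trans (Y_psd _) le_tr.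
Qed.

Lemma rayleigh_sup_near {eta} : 0 < eta ->
  exists s, [/\ forall i, 0 <= s i, 0 < diag_form Y s &
                (rayleigh_sup Y - eta) * diag_form Y s < bform Y s s].
Proof.
move=> eta_gt0.
have : rayleigh_sup Y - eta < rayleigh_sup Y by lra.
case/sup_gt => [|_ [s0 [c_gt0 ->]] lt_q].
  by exists (bform Y (fun _ => 1) (fun _ => 1) / \tr Y), (fun _ => 1);
    rewrite diag_form_one.
(* Since [Y >= 0], passing to [|s0|] keeps the denominator and can only
   increase the numerator. *)
pose s i := `|s0 i|.
have cE : diag_form Y s = diag_form Y s0.
  by apply: eq_bigr => i _; rewrite /s real_normK // num_real.
exists s; rewrite cE; split => // [i|]; first exact: normr_ge0.
apply: lt_le_trans (_ : bform Y s0 s0 <= bform Y s s).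
  by rewrite -ltr_pdivlMr.
apply: ler_sum => i _; apply: ler_sum => j _; apply: le_trans (ler_norm _) _.
by rewrite !normrM (ger0_norm (Y_ge0 i j)).
Qed.

Lemma rayleigh_residual_sq s i :
  (rayleigh_sup Y * (Y i i * s i) - \sum_j Y i j * s j) ^+ 2 <=
  rayleigh_sup Y * Y i i * (rayleigh_sup Y * diag_form Y s - bform Y s s).
Proof.
(* Cauchy-Schwarz for the positive semidefinite form [lam * diag Y - Y]. *)
set lam := rayleigh_sup Y.
pose D i j := Y i i * (i == j)%:R.
pose M i j := lam * D i j + (-1) * Y i j.
have ME u v : bform M u v = lam * bform D u v - bform Y u v.
  by rewrite bformD !bformZ; ring.
have DE v : bform D v v = diag_form Y v.
  by rewrite bform_diag; apply: eq_bigr => k _; ring.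
have M_sym i1 j1 : M i1 j1 = M j1 i1.
  by rewrite /M /D Y_sym eq_sym; case: eqVneq => [->|]; rewrite ?mulr0.
have M_psd v : 0 <= bform M v v by rewrite ME DE subr_ge0 bform_le_rayleigh.
have := bform_CauchySchwarz M_sym M_psd (unitv i) s.
rewrite bform_unitv !ME DE !bform_unitvl.
under [X in lam * X]eq_bigr do rewrite /D mulrAC mulrC eq_sym.
rewrite sum_delta_l => /le_trans; apply; apply: ler_wpM2r.
  by rewrite -DE -ME M_psd.
by rewrite /M /D eqxx mulr1; have := Y_ge0 i i; lra.
Qed.

Lemma rayleigh_approx_eigvec {eps} : 0 < eps ->
  exists s, [/\ forall i, 0 <= s i, 0 < diag_form Y s &
    forall i, rayleigh_sup Y * (Y i i * s i ^+ 2) - eps * diag_form Y s <=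
              s i * \sum_j Y i j * s j].
Proof.
move=> eps_gt0; set lam := rayleigh_sup Y.
have lam_ge0 : 0 <= lam := rayleigh_sup_ge0.
pose eta := eps ^+ 2 / (lam + 1).
have eta_gt0 : 0 < eta by rewrite divr_gt0 ?exprn_gt0 //; lra.
have lam_eta : lam * eta <= eps ^+ 2.
  by rewrite /eta mulrA ler_pdivrMr ?mulrDr ?mulr1 ?lerDl; nra.
have [s [s_ge0 c_gt0 near]] := rayleigh_sup_near eta_gt0.
exists s; split => // i; set c := diag_form Y s.
set r := lam * (Y i i * s i) - \sum_j Y i j * s j.
have r_sq := rayleigh_residual_sq s i; rewrite -/lam -/c -/r in r_sq near.
have d_le := diag_form_term_le s i; rewrite -/c in d_le.
have Yii_ge0 := Y_ge0 i i; have c_ge0 := ltW c_gt0.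
have gap : lam * c - bform Y s s <= eta * c by lra.
have r_sq' : r ^+ 2 <= lam * eta * (Y i i) * c.
  rewrite (_ : _ * c = lam * Y i i * (eta * c)); last by ring.
  exact: le_trans r_sq (ler_wpM2l (mulr_ge0 lam_ge0 Yii_ge0) gap).
have sr_sq : (s i * r) ^+ 2 <= (eps * c) ^+ 2.
  rewrite exprMn; apply: le_trans (ler_wpM2l (sqr_ge0 (s i)) r_sq') _.
  rewrite (_ : s i ^+ 2 * _ = lam * eta * (Y i i * s i ^+ 2) * c); last by ring.
  rewrite (_ : (eps * c) ^+ 2 = eps ^+ 2 * c * c); last by ring.
  apply: ler_wpM2r => //.
  apply: ler_pM => //; first exact: mulr_ge0 lam_ge0 (ltW eta_gt0).
  exact: mulr_ge0 Yii_ge0 (sqr_ge0 _).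
have : s i * r <= eps * c.
  have epsc_ge0 : 0 <= eps * c by rewrite mulr_ge0 // ltW.
  have [sr_le0|sr_gt0] := lerP (s i * r) 0; first lra.
  by rewrite -ler_sqr ?nnegrE // ltW.
by rewrite /r; nra.
Qed.

End Rayleigh.

Lemma Q_feasible_normalize {R : realType} {n : nat} (t : R) (F : 'I_n -> 'I_n -> R) :
  0 <= t -> (forall i j, F i j = F j i) -> (forall v, 0 <= bform F v v) ->
  (forall i j, 0 <= F i j) -> 0 < \sum_i F i i ->
  (forall i, \sum_j F i j = t * F i i) ->
  Q_feasible t (\matrix_(i, j) (t / (\sum_k F k k) * F i j)).
Proof.
move=> t_ge0 F_sym F_psd F_ge0 T_gt0 F_row.
have tT_ge0 : 0 <= t / \sum_k F k k by rewrite divr_ge0 // ltW.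
apply/Q_feasibleP; split.
- by move=> i j; rewrite !mxE F_sym.
- by move=> v; rewrite bform_mx bformZ mulr_ge0.
- by move=> i j; rewrite mxE mulr_ge0.
- by under eq_bigr do rewrite mxE; rewrite -mulr_sumr divfK ?gt_eqF.
- by move=> i; under eq_bigr do rewrite mxE; rewrite -mulr_sumr F_row mxE mulrCA.
Qed.

Section QFeasibleFromApproxEigvec.
Context {R : realType} {n : nat} (E : rel 'I_n).
Hypothesis E_irr : irreflexive E.
Context {Y : 'M[R]_n} {s : 'I_n -> R} {t th : R}.
Hypotheses (Y_sym : forall i j, Y i j = Y j i) (Y_psd : forall v, 0 <= bform Y v v)
  (Y_ge0 : forall i j, 0 <= Y i j) (Y_edge : forall i j, E i j -> Y i j = 0)
  (s_ge0 : forall i, 0 <= s i) (c_gt0 : 0 < diag_form Y s)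
  (t_gt1 : 1 < t) (t_lt_n : t < n%:R) (th_gt0 : 0 < th)
  (residual : forall i, t * (Y i i * s i ^+ 2) - th * diag_form Y s <=
                        s i * \sum_j Y i j * s j).

(* [beta] and [slack] are the values for which the row sums of [F] are
   exactly t times its diagonal: [(n - t) beta = th c] and
   [(t - 1) slack i = s_i (Y s)_i - t Y_ii s_i^2 + th c]. *)
Let c := diag_form Y s.
Let beta := th * c / (n%:R - t).
Let slack i := (s i * \sum_j Y i j * s j - t * (Y i i * s i ^+ 2) + th * c) / (t - 1).
Let F i j := s i * Y i j * s j + beta + slack i * (i == j)%:R.

Let beta_ge0 : 0 <= beta.
Proof. by rewrite divr_ge0 ?mulr_ge0 ?ltW // subr_gt0. Qed.

Let slack_ge0 i : 0 <= slack i.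
Proof. by apply: divr_ge0; [have := residual i; rewrite /c | move: t_gt1]; lra. Qed.

Let F_diag i : F i i = Y i i * s i ^+ 2 + beta + slack i.
Proof. by rewrite /F eqxx mulr1; congr (_ + _ + _); ring. Qed.

Let F_row i : \sum_j F i j = t * F i i.
Proof.
rewrite big_split big_split /= sumr_const card_ord -[beta *+ n]mulr_natl.
under [X in _ + X]eq_bigr do rewrite eq_sym mulrC.
rewrite sum_delta_l F_diag.
have rowE : \sum_j s i * Y i j * s j = s i * \sum_j Y i j * s j.
  by rewrite mulr_sumr; apply: eq_bigr => j _; rewrite mulrA.
have slackE : slack i * (t - 1) =
    s i * \sum_j Y i j * s j - t * (Y i i * s i ^+ 2) + th * c.
  by rewrite divfK // subr_eq0 gt_eqF.
have betaE : beta * (n%:R - t) = th * c by rewrite divfK // subr_eq0 gt_eqF.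
rewrite rowE; lra.
Qed.

Let F_sym i j : F i j = F j i.
Proof.
rewrite /F; case: (eqVneq i j) => [->|_] //.
by rewrite Y_sym /=; ring.
Qed.

Let F_psd v : 0 <= bform F v v.
Proof.
rewrite (bformD (fun i j => s i * Y i j * s j + beta) (fun i j => slack i * (i == j)%:R)).
rewrite (bformD (fun i j => s i * Y i j * s j) (fun _ _ => beta)).
rewrite bform_scale bform_const bform_diag -mulrA -expr2.
apply: addr_ge0; first apply: addr_ge0.
- exact: Y_psd.
- exact: mulr_ge0 beta_ge0 (sqr_ge0 _).
by apply: sumr_ge0 => i _; rewrite mulrAC -expr2 mulr_ge0 ?sqr_ge0.
Qed.

Let F_ge0 i j : 0 <= F i j.
Proof.
rewrite /F !addr_ge0 ?(mulr_ge0 (slack_ge0 i)) ?ler0n //.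
exact: mulr_ge0 (mulr_ge0 (s_ge0 i) (Y_ge0 i j)) (s_ge0 j).
Qed.

Let F_edge i j : E i j -> F i j = beta.
Proof.
move=> Eij; have /negbTE ij : i != j by apply: contraTneq Eij => ->; rewrite E_irr.
by rewrite /F Y_edge // ij mulr0 mulr0 mul0r add0r addr0.
Qed.

Let c_le_trace : c <= \sum_i F i i.
Proof.
apply: ler_sum => i _; rewrite F_diag.
by have := slack_ge0 i; have := beta_ge0; lra.
Qed.

Lemma Q_feasible_from_approx_eigvec :
  exists X, Q_feasible t X /\ edge_mass E X <= th * (t * n%:R ^+ 2 / (n%:R - t)).
Proof.
set T := \sum_i F i i; have T_gt0 : 0 < T := lt_le_trans c_gt0 c_le_trace.
have t_ge0 : 0 <= t := ltW (lt_trans ltr01 t_gt1).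
exists (\matrix_(i, j) (t / T * F i j)); split; first exact: Q_feasible_normalize.
have -> : edge_mass E (\matrix_(i, j) (t / T * F i j)) =
          t / T * beta * \sum_i \sum_j ((E i j)%:R : R).
  rewrite /edge_mass mulr_sumr; apply: eq_bigr => i _; rewrite mulr_sumr.
  apply: eq_bigr => j _; rewrite mxE.
  by case Eij: (E i j); [rewrite F_edge // mul1r mulr1 | rewrite mul0r mulr0].
have edges_le : \sum_i \sum_j ((E i j)%:R : R) <= n%:R ^+ 2.
  apply: le_trans (_ : _ <= \sum_(i < n) \sum_(j < n) (1 : R)) _.
    by do 2![apply: ler_sum => ? _]; case: (E _ _).
  by rewrite !sumr_const !card_ord -[n%:R *+ n]mulr_natr expr2.
have nt_gt0 : 0 < n%:R - t by rewrite subr_gt0.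
have K_ge0 : 0 <= th * t / (n%:R - t).
  by rewrite !(divr_ge0, mulr_ge0, ltW nt_gt0, ltW th_gt0).
have coef_le : t / T * beta <= th * t / (n%:R - t).
  have -> : t / T * beta = th * t / (n%:R - t) * (c / T).
    by rewrite /beta; field; rewrite !gt_eqF.
  by apply: ler_piMr => //; rewrite ler_pdivrMr // mul1r.
rewrite (_ : th * _ = th * t / (n%:R - t) * n%:R ^+ 2); last by ring.
apply: (ler_pM _ _ coef_le edges_le); first by rewrite mulr_ge0 // divr_ge0 // ltW.
by do 2![apply: sumr_ge0 => ? _]; rewrite ler0n.
Qed.

End QFeasibleFromApproxEigvec.

Lemma le0_of_le_small {R : realFieldType} {x K : R} :
  0 < K -> (forall e, 0 < e -> e <= 1 -> x <= e * K) -> x <= 0.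
Proof.
move=> K_gt0 x_le; rewrite leNgt; apply/negP => x_gt0.
have e_gt0 : 0 < x / (K + x) by rewrite divr_gt0 // addr_gt0.
have e_le1 : x / (K + x) <= 1 by rewrite ler_pdivrMr ?addr_gt0 //; lra.
have := x_le _ e_gt0 e_le1; rewrite mulrAC ler_pdivlMr ?addr_gt0 //; nra.
Qed.

Section ThetaPlusBound.
Context {R : realType} {n : nat} (E : rel 'I_n).
Hypothesis G : simple_graph E.

Lemma Q_feasible_small_edge_mass {t th} :
  1 < t -> t < n%:R -> t <= theta_plus R E -> 0 < th -> th <= 1 ->
  exists X, Q_feasible t X /\ edge_mass E X <= th * (t * n%:R ^+ 2 / (n%:R - t)).
Proof.
move=> t_gt1 t_lt_n t_le_tp th_gt0 th_le1.
have : t - th / 2 < theta_plus R E by lra.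
case/sup_gt => [|_ [Y [y [Y_feas ->]]] trY_gt]; first exact: theta_plus_traces_neq0.
case/theta_plus_feasibleP: Y_feas => Y_sym Y_diag_sq _ Y_edge Y_ge0.
have Y_psd v : 0 <= bform Y v v := le_trans (sqr_ge0 _) (Y_diag_sq v).
have trY_gt0 : 0 < \tr Y by lra.
have trY_le : \tr Y <= rayleigh_sup Y.
  apply: (trace_le_rayleigh_sup Y_sym Y_psd Y_ge0 trY_gt0).
  by have := Y_diag_sq (fun _ => 1); under eq_bigr do rewrite mul1r.
have [s [s_ge0 c_gt0 approx]] :=
  rayleigh_approx_eigvec Y_sym Y_psd Y_ge0 trY_gt0 (divr_gt0 th_gt0 (ltr0Sn R 1)).
case: G => _ E_irr.
apply: (Q_feasible_from_approx_eigvec E E_irr Y_sym Y_psd Y_ge0 Y_edge s_ge0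
         c_gt0 t_gt1 t_lt_n th_gt0) => i.
have d_ge0 : 0 <= Y i i * s i ^+ 2 by rewrite mulr_ge0 ?sqr_ge0.
have lam_ge : t - th / 2 <= rayleigh_sup Y by lra.
have := ler_wpM2r d_ge0 lam_ge.
have := ler_wpM2l (ltW (divr_gt0 th_gt0 (ltr0Sn R 1))) (diag_form_term_le Y_ge0 s i).
have := approx i; lra.
Qed.

Lemma S_val_le0 {t} : 1 <= t -> t <= n%:R -> t <= theta_plus R E -> S_val R E t <= 0.
Proof.
move=> t_ge1 t_le_n t_le_tp; have [E_sym E_irr] := G.
have [t_gt1|t_le1] := ltrP 1 t; last first.
  have n_gt0 : (0 < n)%N by rewrite -(ltr_nat R); lra.
  have -> : t = 1 by lra.
  apply: le_trans (S_val_le E (Q_feasible_one (Ordinal n_gt0))) _.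
  by rewrite edge_mass_one // mulr0.
have [[i j] /= Eij|no_edge] := pickP (fun ij : 'I_n * 'I_n => E ij.1 ij.2); last first.
  have [X X_feas] := Q_feasible_exists t_ge1 t_le_n.
  apply: le_trans (S_val_le E X_feas) _; rewrite /edge_mass big1 ?mulr0 // => i _.
  by rewrite big1 // => j _; rewrite (no_edge (i, j)) mul0r.
have t_lt_n : t < n%:R.
  have tp_le : theta_plus R E <= n%:R - 1 := theta_plus_le_edge E G Eij.
  lra.
have K_gt0 : 0 < t * n%:R ^+ 2 / (n%:R - t).
  by rewrite divr_gt0 ?mulr_gt0 ?exprn_gt0 ?subr_gt0 //; lra.
apply: (le0_of_le_small K_gt0) => th th_gt0 th_le1.
have [X [X_feas mass_le]] :=
  Q_feasible_small_edge_mass t_gt1 t_lt_n t_le_tp th_gt0 th_le1.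
have /Q_feasibleP [_ _ X_ge0 _ _] := X_feas.
by have := S_val_le E X_feas; have := edge_mass_ge0 E X_ge0; lra.
Qed.

End ThetaPlusBound.

Theorem mainTheorem12 (R : realType) (n : nat) (E : rel 'I_n)
  (hG : simple_graph E) (t : R) (ht1 : 1 <= t) (htn : t <= n%:R) :
  0 < S_val R E t <-> theta_plus R E < t.
Proof.
split=> [S_gt0|]; last exact: (S_val_gt0 E hG ht1 htn).
rewrite ltNge; apply/negP => t_le_tp.
by have := S_val_le0 E hG ht1 htn t_le_tp; lra.
Qed.
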